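(* Let $K$ be a field of characteristic $0$ such that $K_{\mathrm{ab}}/\mathbb{Q}$ has finite degree, let $\lambda$ be the number of roots of unity in $K$, and let $p$ be a prime with $p\nmid\lambda$. Then for every positive integer $n$, $$H^1(G_n,\mu_{p^{\operatorname{ord}_p(n)}})=0.$$
   Context: $K_{\mathrm{ab}}$ is the maximal abelian subextension of $K/\mathbb{Q}$. $\mu_m$ is the Galois module of $m$th roots of unity, $\zeta_n$ a primitive $n$th root of unity, $G_n:=\mathrm{Gal}(K(\zeta_n)/K)$ acting naturally on roots of unity. *)

From HB Require Import structures.
From mathcomp Require Import all_boot all_order all_algebra all_fingroup all_solvable all_field.
Set Implicit Arguments. Unset Strict Implicit. Unset Printing Implicit Defensive.
Import GRing.Theory.
Local Open Scope ring_scope.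

(* K_ab / Q has finite degree: the degrees of the finite abelian Galois
   extensions F/Q embedding into K (i.e. the finite abelian Galois
   subextensions of K/Q, whose union/compositum is K_ab) are bounded. *)
Definition Kab_finite (K : fieldType) : Prop :=
  exists d : nat, forall (F : splittingFieldType rat) (f : {rmorphism F -> K}),
    galois 1%AS (fullv : {vspace F}) ->
    abelian 'Gal((fullv : {vspace F}) / 1%AS) ->
    (\dim (fullv : {vspace F}) <= d)%N.

Definition num_roots_of_unity (K : fieldType) (lam : nat) : Prop :=
  exists s : seq K, [/\ uniq s, size s = lam &
    forall x : K, x \in s <-> exists m : nat, (0 < m)%N /\ x ^+ m = 1].

(* H^1(G, mu_m) = 0 for G a subgroup of a Galois group of E acting naturally
   on mu_m(E) (written multiplicatively): every crossed homomorphism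
   (1-cocycle) is a principal one (1-coboundary).  Note MathComp composes
   automorphisms as (s * t)%g x = t (s x), so "s o t" is (t * s)%g. *)
Definition cocycle (F0 : fieldType) (E : splittingFieldType F0)
    (G : {set gal_of (fullv : {vspace E})}) (m : nat)
    (c : gal_of (fullv : {vspace E}) -> E) : Prop :=
  (forall s, s \in G -> c s ^+ m = 1) /\
  (forall s t, s \in G -> t \in G -> c (t * s)%g = c s * s (c t)).

Definition coboundary (F0 : fieldType) (E : splittingFieldType F0)
    (G : {set gal_of (fullv : {vspace E})}) (m : nat)
    (c : gal_of (fullv : {vspace E}) -> E) : Prop :=
  exists a : E, a ^+ m = 1 /\ (forall s, s \in G -> c s = s a / a).

Definition H1_mu_trivial (F0 : fieldType) (E : splittingFieldType F0)
    (G : {set gal_of (fullv : {vspace E})}) (m : nat) : Prop :=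
  forall c, cocycle G m c -> coboundary G m c.

From HB Require Import structures.
From mathcomp Require Import all_boot all_order all_algebra all_fingroup all_solvable all_field.
(* The Galois group G of E = K(zeta_n) over K is abelian.  The roots of unity
   of K form a group of order lam prime to p, so K contains no primitive p-th
   root of unity and some s in G moves zeta_p.  Hence s acts on mu_m,
   m = p^(ord_p n), as x |-> x^(e+1) with e prime to m.  For a cocycle c,
   comparing c(st) and c(ts) gives t(c_s) = c_s c_t^e, so c is the coboundary
   of c_s^(-a), where a e = -1 mod m. *)

Set Implicit Arguments. Unset Strict Implicit. Unset Printing Implicit Defensive.
Import GRing.Theory.
Local Open Scope group_scope.
Local Open Scope ring_scope.

Lemma mul_stable_expr_size (R : idomainType) (s : seq R) (k : R) :
  uniq s -> 0 \notin s -> k != 0 -> {subset [seq k * x | x <- s] <= s} ->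
  k ^+ size s = 1.
Proof.
move=> s_uniq s_neq0 k_neq0 ks_sub_s.
have ks_uniq : uniq [seq k * x | x <- s] by rewrite (map_inj_uniq (mulfI k_neq0)).
have [_ ks_eq_s] := uniq_min_size ks_uniq ks_sub_s (eq_leq (esym (size_map _ _))).
have prod_neq0 : \prod_(x <- s) x != 0.
  by rewrite prodf_seq_neq0; apply/allP => x xs; apply: contraNneq s_neq0 => <-.
apply: (mulIf prod_neq0); rewrite mul1r -{2}(perm_big _ (uniq_perm ks_uniq s_uniq ks_eq_s)).
by rewrite big_map big_split /= big_const_seq count_predT iter_mulr_1.
Qed.

Lemma expr_coprime_eq1 (R : idomainType) (x : R) (a b : nat) :
  x ^+ a = 1 -> x ^+ b = 1 -> coprime a b -> x = 1.
Proof.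
have [-> _ xb|a_gt0 xa xb ab] := posnP a.
  by rewrite /coprime gcd0n => /eqP b1; rewrite -[x]expr1 -b1.
have [d d_prim d_dvd_a] := prim_order_exists a_gt0 xa.
have d_dvd_b : (d %| b)%N by rewrite (prim_order_dvd d_prim) xb.
have /eqP d1 : d == 1%N by rewrite -dvdn1 -(eqP ab) dvdn_gcd d_dvd_a.
by rewrite -[x]expr1 -d1 prim_expr_order.
Qed.

Lemma unity_root_prime_eq1 (F : fieldType) (lam p : nat) :
  num_roots_of_unity F lam -> prime p -> ~~ (p %| lam)%N ->
  forall k : F, k ^+ p = 1 -> k = 1.
Proof.
move=> [s [s_uniq <- unity_s]] p_prime p_ndvd k kp.
have s_neq0 : 0 \notin s.
  apply/negP => /unity_s[m [m_gt0]]; rewrite expr0n gtn_eqF //.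
  by move/esym/eqP; rewrite oner_eq0.
have unity_k : k \in s by apply/unity_s; exists p; rewrite prime_gt0.
have k_neq0 : k != 0 by apply: contraNneq s_neq0 => <-.
have ks_sub_s : {subset [seq k * x | x <- s] <= s}.
  move=> _ /mapP[x /unity_s[m [m_gt0 xm]] ->]; apply/unity_s.
  exists (p * m)%N; rewrite muln_gt0 prime_gt0 //; split=> //.
  by rewrite exprMn exprM kp expr1n mulnC exprM xm expr1n mul1r.
apply: expr_coprime_eq1 kp (mul_stable_expr_size s_uniq s_neq0 k_neq0 ks_sub_s) _.
by rewrite prime_coprime.
Qed.

Lemma prim_root_notin_base (F : fieldType) (L : fieldExtType F) (p : nat) (z : L) :
  (forall k : F, k ^+ p = 1 -> k = 1) -> (1 < p)%N -> p.-primitive_root z ->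
  z \notin (1%VS : {vspace L}).
Proof.
move=> unity_F p_gt1 z_prim; apply/negP => /vlineP[k def_z].
have kp : k ^+ p = 1.
  apply: (fmorph_inj (GRing.in_alg L)); rewrite rmorphXn rmorph1 /= -def_z.
  exact: prim_expr_order.
move: (prim_order_dvd z_prim 1); rewrite def_z (unity_F k kp) scale1r expr1 eqxx.
by rewrite dvdn1 (gtn_eqF p_gt1).
Qed.

Lemma gal_moves_notin (F : fieldType) (L : splittingFieldType F)
    (K : {subfield L}) (z : L) :
  galois K fullv -> z \notin K -> exists2 g, g \in 'Gal(fullv / K) & g z != z.
Proof.
move=> galK zK; apply/exists_inP; apply: contraR zK.
rewrite negb_exists_in => /forall_inP fixed_z.
rewrite -(galois_fixedField galK); apply/fixedFieldP; first exact: memvf.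
by move=> g /fixed_z /negPn /eqP.
Qed.

Lemma gal_adjoin_unity_root_abelian (F : fieldType) (L : splittingFieldType F)
    (K : {subfield L}) (w : L) (n : nat) :
  (0 < n)%N -> w ^+ n = 1 -> <<K; w>>%VS = fullv -> abelian 'Gal(fullv / K).
Proof.
move=> n_gt0 wn Kw; apply/centsP => x Gx y Gy; apply/eqP/gal_eqP => a _.
have /Fadjoin_polyP[q qK ->] : a \in <<K; w>>%VS by rewrite Kw memvf.
have q_fixed g : g \in 'Gal(fullv / K) -> map_poly g q = q.
  by move=> Gg; apply: fixedPoly_gal (subvf K) Gg qK.
rewrite !galM ?memvf // -!horner_map /= !q_fixed //.
by rewrite (aut_unity_rootC x y n_gt0 wn).
Qed.

Lemma splitting_Xn_sub_1_prim_root (F : fieldType) (L : splittingFieldType F)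
    (K : {subfield L}) (n : nat) :
  (0 < n)%N -> n%:R != 0 :> L -> splittingFieldFor K ('X^n - 1) fullv ->
  exists2 w, n.-primitive_root w & <<K; w>>%VS = fullv.
Proof.
move=> n_gt0 n_neq0 [rs Drs Krs].
have rs_uniq : uniq rs.
  by rewrite -separable_prod_XsubC -(eqp_separable Drs) separable_Xn_sub_1.
have size_rs : size rs = n.
  by have := eqp_size Drs; rewrite size_prod_XsubC -polyC1 size_XnsubC // => -[].
have rs_unity : all n.-unity_root rs.
  apply/allP => r rs_r; rewrite unity_rootE -subr_eq0.
  have : root (\prod_(x <- rs) ('X - x%:P)) r by rewrite root_prod_XsubC.
  by rewrite -(eqp_root Drs) /root !hornerE.
have /hasP[w _ w_prim] := has_prim_root n_gt0 rs_unity rs_uniq (eq_leq (esym size_rs)).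
exists w => //; apply/eqP; rewrite eqEsubv subvf -{1}Krs.
apply/Fadjoin_seqP; split; first exact: subv_adjoin.
move=> r /(allP rs_unity); rewrite unity_rootE => /eqP /(prim_rootP w_prim)[i ->].
by rewrite rpredX // memv_adjoin.
Qed.

Lemma galois_splitting_Xn_sub_1 (F : fieldType) (L : splittingFieldType F)
    (K : {subfield L}) (n : nat) :
  n%:R != 0 :> L -> splittingFieldFor K ('X^n - 1) fullv -> galois K fullv.
Proof.
move=> n_neq0 splitK; apply/splitting_galoisField; exists ('X^n - 1); split=> //.
  by rewrite rpredB ?rpredX ?polyOverX ?rpred1.
exact: separable_Xn_sub_1.
Qed.

Lemma gal_prime_power_root_exponent (F : fieldType) (L : splittingFieldType F)
    (p k : nat) (om : L) :
  prime p -> galois 1%AS (fullv : {vspace L}) -> (forall c : F, c ^+ p = 1 -> c = 1) ->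
  (p ^ k).-primitive_root om ->
  exists g e, [/\ g \in 'Gal((fullv : {vspace L}) / 1%AS), coprime (p ^ k) e
                & forall x, x ^+ (p ^ k) = 1 -> g x = x ^+ e.+1].
Proof.
move=> p_prime galL unity_F om_prim.
have [-> | k_gt0] := posnP k.
  exists 1%g, 0%N; split; rewrite ?group1 ?coprime1n // => x _.
  by rewrite gal_id expr1.
set m := (p ^ k)%N in om_prim *.
have p_gt1 := prime_gt1 p_prime.
have m_gt1 : (1 < m)%N by rewrite -(expn0 p) ltn_exp2l // lt0n.
have p_dvd_m : (p %| m)%N := dvdn_exp k_gt0 (dvdnn p).
have z_prim := dvdn_prim_root om_prim p_dvd_m.
set z := om ^+ (m %/ p) in z_prim *.
have [g Gg gz] := gal_moves_notin galL (prim_root_notin_base unity_F p_gt1 z_prim).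
have [r r_cop g_om] := aut_prim_rootP g om_prim.
have r_gt0 : (0 < r)%N.
  by rewrite lt0n; apply: contraTneq r_cop => ->; rewrite /coprime gcd0n gtn_eqF.
have g_unity x : x ^+ m = 1 -> g x = x ^+ r.
  by move=> /(prim_rootP om_prim)[i ->]; rewrite rmorphXn g_om exprAC.
exists g, r.-1; split=> //; last by rewrite prednK.
rewrite /m coprime_pexpl // prime_coprime //; apply: contra gz.
rewrite (prim_order_dvd z_prim) => /eqP z_r.
have zm : z ^+ m = 1 by rewrite /z exprAC (prim_expr_order om_prim) expr1n.
by rewrite g_unity // -(prednK r_gt0) exprS z_r mulr1.
Qed.

Lemma H1_mu_trivial_of_exponent (F : fieldType) (L : splittingFieldType F)
    (G : {set gal_of (fullv : {vspace L})}) (m e : nat) (g : gal_of fullv) :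
  abelian G -> (0 < m)%N -> g \in G -> coprime m e ->
  (forall x : L, x ^+ m = 1 -> g x = x ^+ e.+1) ->
  H1_mu_trivial G m.
Proof.
move=> abG m_gt0 Gg m_cop_e g_exp c [cm c_cocycle].
have c_neq0 t : t \in G -> c t != 0.
  move=> Gt; apply: contra_eqN (cm t Gt) => /eqP->.
  by rewrite expr0n gtn_eqF // eq_sym oner_eq0.
have t_cg t : t \in G -> t (c g) = c g * c t ^+ e.
  move=> Gt; apply: (mulfI (c_neq0 t Gt)).
  rewrite -c_cocycle // (centsP abG g Gg t Gt) c_cocycle // g_exp ?cm //.
  by rewrite exprS mulrCA.
have [a _] := Bezoutl e m_gt0; rewrite (eqP m_cop_e) => m_dvd.
have c_exp_inv t : t \in G -> c t ^+ (a * e) = (c t)^-1.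
  move=> Gt; apply: (mulIf (c_neq0 t Gt)); rewrite mulVf ?c_neq0 // -exprSr.
  by rewrite (expr_dvd (cm t Gt)) // -add1n.
exists (c g ^- a); split.
  by rewrite exprVn -exprM mulnC exprM cm // expr1n invr1.
move=> t Gt; rewrite fmorphV rmorphXn -[X in X ^- a]/(t (c g)) t_cg //.
rewrite exprMn -exprM mulnC c_exp_inv //.
by rewrite invfM invrK mulrAC mulVf ?expf_neq0 ?c_neq0 // mul1r invrK.
Qed.

Theorem lemma2p5 (K : fieldType) (lam p : nat) :
  [pchar K] =i pred0 ->
  Kab_finite K ->
  num_roots_of_unity K lam ->
  prime p -> ~~ (p %| lam)%N ->
  forall (n : nat), (0 < n)%N ->
  forall (E : splittingFieldType K),
    splittingFieldFor 1%AS ('X^n - 1 : {poly E}) fullv ->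
    H1_mu_trivial ('Gal((fullv : {vspace E}) / 1%AS))%g (p ^ logn p n).
Proof.
move=> charK0 _ unity_K p_prime p_ndvd_lam n n_gt0 E splitE.
have E_char0 : [pchar E] =i pred0 by move=> q; rewrite pchar_lalg charK0.
have n_neq0 : n%:R != 0 :> E by rewrite ((pcharf0P E).1 E_char0) -lt0n.
have [w w_prim Kw] := splitting_Xn_sub_1_prim_root n_gt0 n_neq0 splitE.
have galE := galois_splitting_Xn_sub_1 n_neq0 splitE.
have om_prim := dvdn_prim_root w_prim (pfactor_dvdnn p n).
have [g [e [Gg m_cop_e g_exp]]] := gal_prime_power_root_exponent p_prime galE
  (unity_root_prime_eq1 unity_K p_prime p_ndvd_lam) om_prim.
apply: H1_mu_trivial_of_exponent Gg m_cop_e g_exp.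
- exact: gal_adjoin_unity_root_abelian n_gt0 (prim_expr_order w_prim) Kw.
- by rewrite expn_gt0 prime_gt0.
Qed.
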